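(* For all $n\ge1$, $\mathbf{cf}_{n,1}(p,q)|_{p^0}=q^{\binom{n}{2}}$. Moreover, $$\mathbf{cf}_{n,1}(p,q)|_{p^1}=\begin{cases}0 & n=1,2,3,\\ \binom{n-2}{2}q^{\binom{n}{2}-2} & n\ge4,\end{cases}$$ $$\mathbf{cf}_{n,1}(p,q)|_{p^2}=\begin{cases}0 & n=1,2,3,4,\\ \left(3\binom{n-1}{4}-\binom{n-3}{2}\right)q^{\binom{n}{2}-4} & n\ge5,\end{cases}$$ $$\mathbf{cf}_{n,1}(p,q)|_{p^3}=\begin{cases}0 & n=1,2,3,4,5,\\ \left(15\binom{n}{6}-6\binom{n-2}{4}+\binom{n-4}{4}\right)q^{\binom{n}{2}-6} & n\ge5.\end{cases}$$
   Context: $F_1(p,q)=q$, $F_2(p,q)=q^2$ and $F_m(p,q)=qF_{m-1}(p,q)+pF_{m-2}(p,q)$ for $m\ge3$. Let $(x)_{\uparrow_{F,p,q,0}}=1$ and $(x)_{\uparrow_{F,p,q,k}}=x(x+F_1(p,q))\cdots(x+F_{k-1}(p,q))$ for $k\ge1$. Define the polynomials $\mathbf{cf}_{n,k}(p,q)$ for $0\le k\le n$ by $(x)_{\uparrow_{F,p,q,n}}=\sum_{k=0}^n\mathbf{cf}_{n,k}(p,q)x^k$. For a polynomial $f$ in $p$ with coefficients in $\mathbb{Q}[q]$, $f|_{p^s}$ denotes the coefficient of $p^s$. *)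

From mathcomp Require Import all_boot all_order all_algebra.
Set Implicit Arguments. Unset Strict Implicit. Unset Printing Implicit Defensive.
Import Order.TTheory GRing.Theory Num.Theory.
Local Open Scope ring_scope.

(* Polynomials in p with coefficients in Q[q]:  PQ := (Q[q])[p]. *)
Notation PQ := {poly {poly rat}}.

Definition pvar : PQ := 'X.
Definition qvar : PQ := ('X : {poly rat})%:P.

(* F_m(p,q); F 0 is an unused default (set to 0). *)
Fixpoint Fpq (m : nat) : PQ :=
  match m with
  | 0 => 0
  | 1 => qvar
  | 2 => qvar ^+ 2
  | (m'.+1 as m1).+1 => qvar * Fpq m1 + pvar * Fpq m'
  end.

(* (x)_{uparrow F,p,q,k} as a polynomial in x with coefficients in Q[q][p] *)
Definition risingF (k : nat) : {poly PQ} :=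
  if k is 0 then 1
  else 'X * \prod_(1 <= i < k) ('X + (Fpq i)%:P).

Definition cf (n k : nat) : PQ := (risingF n)`_k.

From mathcomp Require Import all_boot all_order all_algebra.
From mathcomp Require Import ring zify.
Import GRing.Theory Num.Theory.
Set Implicit Arguments.
Unset Strict Implicit.
Local Open Scope ring_scope.

(* The coefficient of x in the rising factorial is the product F_1 ... F_(n-1).
   Each F_m is homogeneous, F_m = sum_k C(m-1-k, k) p^k q^(m-2k), so the
   product is homogeneous of total degree C(n, 2), and its coefficient
   sequence is the iterated convolution of those of the F_i.  The first four
   terms of that convolution satisfy first-order recursions in n, which are
   solved by polynomial identities between binomial coefficients. *)

Lemma natr_ffactE (R : pzRingType) (a k : nat) :
  (a ^_ k)%:R = \prod_(i < k) (a%:R - i%:R : R).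
Proof.
elim: k => [|k IH]; first by rewrite big_ord0.
rewrite big_ord_recr /= -IH ffactnSr natrM.
have [le_ka | lt_ak] := leqP k a; first by rewrite natrB.
by rewrite ffact_small // !mul0r.
Qed.

Lemma natr_binE (R : numFieldType) (a k : nat) :
  'C(a, k)%:R = \prod_(i < k) (a%:R - i%:R : R) / k`!%:R.
Proof.
by rewrite -natr_ffactE -bin_ffact natrM mulfK // pnatr_eq0 -lt0n fact_gt0.
Qed.

Ltac binomial_identity :=
  rewrite ?natrM ?natr_binE ?big_ord_recr ?big_ord0 /= ?factS ?fact0 /=; by field.

Section Graded.

Context {R : comNzRingType}.

(* [graded N c P]: P = sum_k c_k p^k q^(N - 2k); multiplying by q^(2k)
   instead of subtracting 2k avoids truncated subtraction. *)
Definition graded (N : nat) (c : nat -> R) (P : {poly {poly R}}) :=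
  forall k, 'X ^+ k.*2 * P`_k = c k *: 'X ^+ N.

Definition conv (c e : nat -> R) (k : nat) : R :=
  \sum_(j < k.+1) c j * e (k - j)%N.

Lemma graded1 : graded 0 (fun k => (k == 0)%:R) 1.
Proof. by case=> [|k]; rewrite coef1 /= ?scale1r ?scale0r ?mulr0 ?mulr1. Qed.

Lemma gradedM N M c e P Q :
  graded N c P -> graded M e Q -> graded (N + M) (conv c e) (P * Q).
Proof.
move=> gP gQ k; rewrite coefM mulr_sumr /conv scaler_suml.
apply: eq_bigr => j _.
have -> : 'X ^+ k.*2 = 'X ^+ j.*2 * 'X ^+ (k - j).*2 :> {poly R}.
  by rewrite -exprD -doubleD subnKC // -ltnS.
rewrite mulrACA gP gQ exprD -!mul_polyC rmorphM /=; ring.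
Qed.

End Graded.

Lemma graded_coef (R : idomainType) N c (P : {poly {poly R}}) k :
  graded N c P -> (k.*2 <= N)%N \/ c k = 0 -> P`_k = c k *: 'X ^+ (N - k.*2).
Proof.
move=> /(_ k) gPk; have Xn0 : 'X ^+ k.*2 != 0 :> {poly R}.
  by rewrite expf_eq0 polyX_eq0 andbF.
case=> [le_kN | ck0].
  by apply: (mulfI Xn0); rewrite gPk -scalerAr -exprD subnKC.
by move: gPk; rewrite ck0 !scale0r => /eqP; rewrite mulf_eq0 (negPf Xn0) => /eqP.
Qed.

Lemma bin_subSn m k : 'C(m.+1 - k, k.+1) = ('C(m - k, k.+1) + 'C(m - k, k))%N.
Proof.
have [le_km | lt_mk] := leqP k m; first by rewrite subSn // binS.
have -> : (m.+1 - k = 0)%N by lia.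
have -> : (m - k = 0)%N by lia.
by rewrite !bin0n; case: k lt_mk.
Qed.

Definition fibcoef (n k : nat) : rat := 'C(n.-1 - k, k)%:R.

Lemma FpqSS m : Fpq m.+3 = qvar * Fpq m.+2 + pvar * Fpq m.+1.
Proof. by []. Qed.

Lemma Fpq_graded n : (1 <= n)%N -> graded n (fibcoef n) (Fpq n).
Proof.
suff Fpq12 m : graded m.+1 (fibcoef m.+1) (Fpq m.+1)
             /\ graded m.+2 (fibcoef m.+2) (Fpq m.+2).
  by case: n => // n _; case: (Fpq12 n).
elim: m => [|m [g1 g2]].
  split=> -[|k]; rewrite /= /qvar ?coefCM coefC /fibcoef /= ?mulr0.
  - by rewrite scale1r mul1r.
  - by rewrite sub0n bin0n scale0r.
  - by rewrite scale1r mul1r expr2.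
  - by rewrite subSS sub0n bin0n scale0r.
split=> // k; rewrite FpqSS coefD /qvar coefCM /pvar coefXM.
move: (Fpq m.+1) (Fpq m.+2) g1 g2 => F1 F2 g1 g2.
case: k => [|k] /=.
  by rewrite addr0 mulrCA g2 /fibcoef !bin0 -scalerAr exprS.
have -> : 'X ^+ k.+1.*2 * ('X * F2`_k.+1 + F1`_k)
          = 'X * ('X ^+ k.+1.*2 * F2`_k.+1) + 'X ^+ 2 * ('X ^+ k.*2 * F1`_k).
  by rewrite doubleS !exprS; ring.
rewrite g1 g2 /fibcoef /= !subSS bin_subSn natrD -!mul_polyC rmorphD /= !exprS.
ring.
Qed.

(* [fibcoef 0] is the unit sequence, so the first step is the identity, as
   cf 1 1 = 1 is the empty product. *)
Fixpoint cfcoef (n : nat) : nat -> rat :=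
  if n is n'.+1 then conv (cfcoef n') (fibcoef n') else fun k => (k == 0)%:R.

Lemma prodFpq_graded n : graded 'C(n, 2) (cfcoef n) (\prod_(1 <= i < n) Fpq i).
Proof.
elim: n => [|[|n] IH]; first by rewrite big_geq //; apply: graded1.
  rewrite big_geq // -(mulr1 1) (_ : 'C(1, 2) = 0 + 0)%N //.
  have g0 : graded 0 (fibcoef 0) 1.
    by move=> k; rewrite /fibcoef sub0n bin0n; apply: graded1.
  exact: gradedM graded1 g0.
by rewrite big_nat_recr //= binS bin1; apply: gradedM IH (Fpq_graded _).
Qed.

Lemma cf_graded n : (1 <= n)%N -> graded 'C(n, 2) (cfcoef n) (cf n 1).
Proof.
case: n => // n _; rewrite /cf /risingF coefXM /= coef0_prod.
under eq_bigr => i _ do rewrite coefD coefX coefC add0r.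
exact: prodFpq_graded.
Qed.

Lemma cfcoef0 n : cfcoef n 0 = 1.
Proof.
by elim: n => // n IH; rewrite /= /conv big_ord1 IH /fibcoef subn0 bin0 mul1r.
Qed.

Lemma cfcoef1 n : cfcoef n 1 = 'C(n - 2, 2)%:R.
Proof.
(* Once n >= 4 no subtraction truncates and the identity is polynomial in n. *)
elim: n => // n IH; rewrite /= /conv !big_ord_recr big_ord0 /= !subSS !subn0.
rewrite cfcoef0 IH /fibcoef.
by case: n {IH} => [|[|[|[|n]]]]; rewrite /= ?subSS ?subn0 ?sub0n; binomial_identity.
Qed.

Lemma cfcoef2 n : cfcoef n 2 = (3 * 'C(n - 1, 4))%:R - 'C(n - 3, 2)%:R.
Proof.
elim: n => // n IH; rewrite /= /conv !big_ord_recr big_ord0 /= !subSS !subn0.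
rewrite cfcoef0 cfcoef1 IH /fibcoef.
by case: n {IH} => [|[|[|[|n]]]]; rewrite /= ?subSS ?subn0 ?sub0n; binomial_identity.
Qed.

Lemma cfcoef3 n :
  cfcoef n 3 = (15 * 'C(n, 6))%:R - (6 * 'C(n - 2, 4))%:R + 'C(n - 4, 4)%:R.
Proof.
elim: n => // n IH; rewrite /= /conv !big_ord_recr big_ord0 /= !subSS !subn0.
rewrite cfcoef0 cfcoef1 cfcoef2 IH /fibcoef.
by case: n {IH} => [|[|[|[|n]]]]; rewrite /= ?subSS ?subn0 ?sub0n; binomial_identity.
Qed.

Lemma leq_bin2 n : (3 <= n)%N -> (n <= 'C(n, 2))%N.
Proof.
move=> n3; have : ('C(n, 2) * 2 = n * n.-1)%N.
  by rewrite bin_ffact ffactnSr ffactn1 subn1.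
by case: n n3 => // n n3 /=; nia.
Qed.

Lemma cf1_coef n k t (c : rat) :
  (1 <= n)%N -> (3 <= t)%N -> (k.*2 <= t.+1)%N ->
  cfcoef n k = c -> ((n <= t)%N -> c = 0) ->
  (cf n 1)`_k = if (n <= t)%N then 0 else c *: 'X ^+ ('C(n, 2) - k.*2).
Proof.
move=> n1 t3 kt <- small; rewrite (graded_coef (cf_graded n1)).
  by case: ifP => // /small ->; rewrite scale0r.
have [/small | lt_tn] := leqP n t; first by right.
by left; apply: leq_trans (leq_bin2 _); lia.
Qed.

Theorem theorem14 (n : nat) (hn : (1 <= n)%N) :
  (cf n 1)`_0 = 'X ^+ 'C(n, 2)
  /\ (cf n 1)`_1 =
       (if (n <= 3)%N then 0
        else ('C(n - 2, 2))%:R *: 'X ^+ ('C(n, 2) - 2))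
  /\ (cf n 1)`_2 =
       (if (n <= 4)%N then 0
        else ((3 * 'C(n - 1, 4))%:R - ('C(n - 3, 2))%:R : rat)
               *: 'X ^+ ('C(n, 2) - 4))
  /\ (cf n 1)`_3 =
       (if (n <= 5)%N then 0
        else ((15 * 'C(n, 6))%:R - (6 * 'C(n - 2, 4))%:R + ('C(n - 4, 4))%:R : rat)
               *: 'X ^+ ('C(n, 2) - 6)).
Proof.
split; first by rewrite (graded_coef (cf_graded hn)) ?cfcoef0 ?scale1r ?subn0 //; left.
split; last split.
- apply: (cf1_coef hn) (cfcoef1 n) _ => // small.
  by rewrite bin_small //; lia.
- apply: (cf1_coef hn) (cfcoef2 n) _ => // small.
  by rewrite !bin_small ?muln0 ?subrr //; lia.
- apply: (cf1_coef hn) (cfcoef3 n) _ => // small.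
  by rewrite !bin_small ?muln0 ?subrr ?add0r //; lia.
Qed.
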